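(* For all integers $r,c,K$ there exists an integer $N$ such that the following holds. Let $G$ be a digraph with maximum out-degree at most $c$ and let $S,T\subseteq V(G)$ be such that $|T|\ge N$ and for all $t,t'\in T$ there exist a vertex $s=s(t,t')\in S$, a directed path of length at most $r$ from $s$ to $t$ and a directed path of length at most $r$ from $s$ to $t'$. Then $G$ contains a crown of order $K$ as a depth-$r$ minor.
   Context: The crown of order $K$, $S_K$, is the digraph with vertices $v_1,\dots,v_K$ and $v_{ij}$ ($1\le i<j\le K$) and arcs $(v_{ij},v_i),(v_{ij},v_j)$. Depth-$r$ minors: a digraph $H$ has a directed model in $G$ if there is a map $\delta$ assigning to each $v\in V(H)$ a subgraph $\delta(v)\subseteq G$ and to each arc $e$ of $H$ an arc $\delta(e)$ of $G$ with (1) branch sets pairwise disjoint; (2) if $e=(u,v)$ and $\delta(e)=(u',v')$ then $u'\in\delta(u)$, $v'\in\delta(v)$; (3) for each $v$, with $\mathrm{in}(\delta(v))$ (resp. $\mathrm{out}(\delta(v))$) the vertices of $\delta(v)$ lying on images of arcs entering (resp. leaving) $v$: every in-vertex reaches every out-vertex by a directed path in $\delta(v)$, some vertex of $\delta(v)$ reaches all out-vertices, and some vertex of $\delta(v)$ is reached from all in-vertices. $H$ is a depth-$r$ minor of $G$ if such a model exists in which all paths in the branch sets have length at most $r$. *)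

From mathcomp Require Import all_boot.
Set Implicit Arguments. Unset Strict Implicit. Unset Printing Implicit Defensive.

(* There is a directed walk of length at most r from x to y using arcs of A.
   (Existence of such a walk is equivalent to existence of a directed path
   of length at most r.) *)
Definition dpath_le (V : finType) (A : rel V) (r : nat) (x y : V) : Prop :=
  exists p : seq V, [&& path A x p, last x p == y & size p <= r].

Definition max_outdeg_le (V : finType) (E : rel V) (c : nat) : Prop :=
  forall x : V, #|[set y | E x y]| <= c.

(* Directed model of H = (VH, EH) in G = (V, E) with depth r.
   delta(v) is the subgraph with vertex set B v and arc set A v;
   the image of an arc (u,w) of H is the arc f u w of G. *)
Definition depth_model (VH : finType) (EH : rel VH) (V : finType) (E : rel V)
    (r : nat) (B : VH -> {set V}) (A : VH -> rel V) (f : VH -> VH -> V * V)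
    : Prop :=
  (forall v x y, A v x y -> [/\ E x y, x \in B v & y \in B v]) /\
  (forall u w, u != w -> [disjoint B u & B w]) /\
  (forall u w, EH u w ->
     [/\ E (f u w).1 (f u w).2, (f u w).1 \in B u & (f u w).2 \in B w]) /\
  (forall v,
     let inv := [set (f u v).2 | u in [set u | EH u v]] in
     let outv := [set (f v w).1 | w in [set w | EH v w]] in
     (forall x y, x \in inv -> y \in outv -> dpath_le (A v) r x y) /\
     (exists2 z, z \in B v & forall y, y \in outv -> dpath_le (A v) r z y) /\
     (exists2 z, z \in B v & forall x, x \in inv -> dpath_le (A v) r x z)).

Definition depth_minor (r : nat) (VH : finType) (EH : rel VH)
    (V : finType) (E : rel V) : Prop :=
  exists (B : VH -> {set V}) (A : VH -> rel V) (f : VH -> VH -> V * V),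
    depth_model EH E r B A f.

(* The crown of order K: vertices v_i (i < K) and v_ij (i < j < K),
   arcs (v_ij, v_i) and (v_ij, v_j). *)
Definition crownV (K : nat) : finType :=
  ('I_K + {p : 'I_K * 'I_K | p.1 < p.2})%type.

Definition crownE (K : nat) : rel (crownV K) :=
  fun a b => match a, b with
             | inr p, inl i => (i == (val p).1) || (i == (val p).2)
             | _, _ => false
             end.

From mathcomp Require Import all_boot zify.
Set Implicit Arguments. Unset Strict Implicit. Unset Printing Implicit Defensive.

(* Fix a common source for every pair of vertices of [T].  The [3r]-out-balls
   around these sources have boundedly many vertices, so a counting argument
   extracts [K+1] vertices of [T] none of which lies in the ball of the source
   of two others.  Hence the first [K] of them, the terminals, are pairwise more
   than [r] apart (else a terminal lies in the ball of the source of another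
   terminal and the last vertex), and the source of two terminals is more than
   [3r] away from every other terminal.
   The branch set of the crown vertex [v_i] is the cell of the [i]-th terminal:
   the vertices within [r] of it and more than [r] closer to it than to any
   other terminal.  The branch set of [v_ij] consists of the two greedy shortest
   walks from the source of the [i]-th and [j]-th terminals towards them, cut
   where they enter the cells.  A vertex on these walks is within [2r] of these
   two terminals and farther than [2r] from all the others, which makes
   distinct branch sets disjoint. *)


Section Counting.
Variable V : finType.

Lemma sum_nat_setId (T : {set V}) (P : pred V) :
  \sum_(x in T) P x = #|[set x in T | P x]|.
Proof.
rewrite -sum1_card [RHS](eq_bigl (fun x => (x \in T) && P x)) => [|x]; last by rewrite inE.
by rewrite big_mkcondr; apply: eq_bigr => x _; case: (P x).
Qed.

Lemma card_bigcup_le (I : finType) (P : pred I) (G : I -> {set V}) :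
  #|\bigcup_(i | P i) G i| <= \sum_(i | P i) #|G i|.
Proof.
elim/big_rec2: _ => [|i U n _ IH]; first by rewrite cards0.
rewrite cardsU; lia.
Qed.

Lemma exists_le_average (T : {set V}) (Q : V -> nat) X :
  0 < #|T| -> \sum_(x in T) Q x <= #|T| * X -> exists2 x, x \in T & Q x <= X.
Proof.
move=> T_gt0 sum_le.
have [/exists_inP[x xT Qx]|/exists_inPn Q_gt] := boolP [exists x in T, Q x <= X].
  by exists x.
have : \sum_(x in T) X.+1 <= \sum_(x in T) Q x.
  by apply: leq_sum => x /Q_gt; rewrite ltnNge.
rewrite sum_nat_const; lia.
Qed.

Lemma markov_nat (T : {set V}) (Q : V -> nat) d :
  #|[set x in T | d < Q x]| * d.+1 <= \sum_(x in T) Q x.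
Proof.
rewrite -sum_nat_setId big_distrl /=.
by apply: leq_sum => x _; case: ltnP => //= ?; rewrite mul1n.
Qed.

Lemma bounded_degree_independent_set (R : rel V) d (W : {set V}) :
  symmetric R -> {in W, forall y, #|[set z in W | R y z]| <= d} ->
  exists2 U : {set V}, U \subset W &
    #|W| <= d.+1 * #|U| /\ {in U &, forall y z, y != z -> ~~ R y z}.
Proof.
move=> symR; have [n] := ubnP #|W|; elim: n W => // n IH W /ltnSE le_Wn degW.
have [->|[y yW]] := set_0Vmem W.
  by exists set0; rewrite ?sub0set ?cards0 //; split=> // ? ?; rewrite inE.
pose N := [set z in W | R y z].
pose W' := [set z in W | (z != y) && ~~ R y z].
have sW'W : W' \subset W by apply/subsetP => z; rewrite inE => /andP[].
have yW' : y \notin W' by rewrite inE eqxx andbF.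
have le_W : #|W| <= #|W'| + d.+1.
  have : W \subset W' :|: (y |: N).
    apply/subsetP => z zW; rewrite !inE zW /=.
    by case: (z =P y) => //= _; case: (R y z).
  move/subset_leq_card/leq_trans; apply.
  by have := degW y yW; rewrite -/N cardsU cardsU1; case: (y \notin N) => /=; lia.
have [U sUW' [le_W'U indepU]] : exists2 U : {set V}, U \subset W' &
    #|W'| <= d.+1 * #|U| /\ {in U &, forall y z, y != z -> ~~ R y z}.
  apply: IH => [|z /(subsetP sW'W) zW].
    apply: leq_trans le_Wn; apply: proper_card; rewrite properE sW'W.
    by apply/subsetPn; exists y.
  apply: leq_trans (degW z zW); apply/subset_leq_card/subsetP => x.
  by rewrite !inE => /andP[/andP[-> _] ->].
have yU : y \notin U by apply: contra yW'; apply: (subsetP sUW').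
have farU z : z \in U -> ~~ R y z.
  by move/(subsetP sUW'); rewrite inE => /and3P[].
exists (y |: U); first by rewrite subUset sub1set yW (subset_trans sUW' sW'W).
split; first by rewrite cardsU1 yU mulnS; lia.
move=> a b /setU1P[->|aU] /setU1P[->|bU]; rewrite ?eqxx //.
- by move=> _; apply: farU.
- by move=> _; rewrite symR farU.
- exact: indepU.
Qed.

End Counting.


Section Avoiding.
Variables (V : finType) (F : V -> V -> {set V}) (m : nat).
Hypothesis card_F : forall x y, #|F x y| <= m.

Definition half_conflict c y z := [|| c \in F y z, y \in F c z | y \in F z c].
Definition conflict c y z := half_conflict c y z || half_conflict c z y.

Lemma conflict_sym c : symmetric (conflict c).
Proof. by move=> y z; rewrite /conflict orbC. Qed.

Lemma sum_conflict_le (T : {set V}) :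
  \sum_(c in T) \sum_(y in T) \sum_(z in T) conflict c y z <= #|T| * (6 * m * #|T|).
Proof.
pose S3 (G : V -> V -> V -> nat) :=
  \sum_(x in T) \sum_(y in T) \sum_(z in T) G x y z.
have S3_le G : (forall x y, \sum_(z in T) G x y z <= m) ->
    S3 G <= #|T| * (#|T| * m).
  by move=> Gm; rewrite -!sum_nat_const; do 2!apply: leq_sum => ? _.
have S3_swap G : S3 G = S3 (fun x z y => G x y z).
  by apply: eq_bigr => x _; rewrite exchange_big.
have S3_rot G : S3 G = S3 (fun y z x => G x y z).
  by rewrite /S3 exchange_big; apply: eq_bigr => y _; rewrite exchange_big.
have S3D G H : S3 (fun x y z => G x y z + H x y z) = S3 G + S3 H.
  by rewrite /S3 -big_split; apply: eq_bigr => x _; rewrite -big_split;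
    apply: eq_bigr => y _; rewrite -big_split.
have S3_leq G H : (forall x y z, G x y z <= H x y z) -> S3 G <= S3 H.
  by move=> GH; do 3!apply: leq_sum => ? _.
have mem_le x y : \sum_(z in T) (z \in F x y) <= m.
  rewrite sum_nat_setId (leq_trans _ (card_F x y)) // subset_leq_card //.
  by apply/subsetP => z; rewrite inE => /andP[].
have half_le : S3 half_conflict <= 3 * (#|T| * (#|T| * m)).
  apply: leq_trans (S3_leq _ (fun c y z => (c \in F y z) + (y \in F c z) + (y \in F z c)) _) _.
    move=> c y z /=; rewrite /half_conflict.
    by case: (c \in F y z); case: (y \in F c z); case: (y \in F z c).
  rewrite !S3D S3_rot [S3 (fun c y z => y \in F c z)]S3_swap.
  rewrite [S3 (fun c y z => y \in F z c)]S3_swap.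
  have := S3_le _ (fun y z => mem_le y z); have := S3_le _ (fun y z => mem_le z y); lia.
have le_S3 : S3 conflict <= S3 half_conflict + S3 half_conflict.
  rewrite [X in _ <= _ + X]S3_swap -S3D; apply: S3_leq => c y z /=; rewrite /conflict.
  by case: (half_conflict c y z); case: (half_conflict c z y).
change (S3 conflict <= #|T| * (6 * m * #|T|)); lia.
Qed.

(* Pick [c] with at most the average number of conflicts, discard the [y]
   involved in more than [12m] of them (at most half of [T], by Markov) and take
   an independent set of the remaining conflict graph. *)
Lemma exists_good_center (T : {set V}) : 0 < #|T| ->
  exists c (U : {set V}), [/\ c \in T, U \subset T :\ c, #|T| <= 2 * (12 * m).+1 * #|U| + 2
    & {in U &, forall y z, y != z -> ~~ conflict c y z}].
Proof.
move=> T_gt0; have [c cT sum_c] := exists_le_average T_gt0 (sum_conflict_le T).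
pose deg y := \sum_(z in T) conflict c y z.
pose H := [set y in T | 12 * m < deg y].
pose W := [set y in T :\ c | deg y <= 12 * m].
have card_H : #|H| * (12 * m).+1 <= 6 * m * #|T| := leq_trans (markov_nat _ _ _) sum_c.
have le_TWH : #|T| <= #|W| + #|H| + 1.
  have : T \subset W :|: H :|: [set c].
    apply/subsetP => y yT; rewrite !inE yT /= andbT.
    by case: (y =P c) => //= _; case: ltnP.
  by move/subset_leq_card/leq_trans; apply; rewrite !cardsU cards1; lia.
have degW : {in W, forall y, #|[set z in W | conflict c y z]| <= 12 * m}.
  move=> y; rewrite inE => /andP[_ deg_y]; apply: leq_trans deg_y.
  rewrite /deg sum_nat_setId; apply/subset_leq_card/subsetP => z.
  by rewrite !inE => /andP[/andP[/andP[_ ->] _] ->].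
have [U sUW [le_WU indepU]] := bounded_degree_independent_set (conflict_sym c) degW.
exists c, U; split=> //.
  by apply: subset_trans sUW _; apply/subsetP => y; rewrite inE => /andP[].
have : 2 * #|H| * (12 * m).+1 <= #|T| * (12 * m).+1 by nia.
rewrite leq_pmul2r // => le_HT; nia.
Qed.

Definition avoiding (s : seq V) :=
  {in s & &, forall x y z, x != y -> z != x -> z != y -> z \notin F x y}.

Lemma avoiding_cons c s : avoiding s ->
  {in s &, forall y z, y != z -> ~~ conflict c y z} -> avoiding (c :: s).
Proof.
move=> avs good_c x y z; rewrite !inE.
case/predU1P => [->|xs]; case/predU1P => [->|ys]; case/predU1P => [->|zs];
  rewrite ?eqxx //.
- move=> _ _ zy; have := good_c y z ys zs; rewrite eq_sym zy => /(_ isT).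
  by apply: contra => zF; rewrite /conflict /half_conflict zF !orbT.
- move=> _ zx _; have := good_c x z xs zs; rewrite eq_sym zx => /(_ isT).
  by apply: contra => zF; rewrite /conflict /half_conflict zF !orbT.
- move=> xy _ _; have := good_c x y xs ys xy.
  by apply: contra => cF; rewrite /conflict /half_conflict cF.
- exact: avs.
Qed.

Fixpoint avoiding_bound K := if K is K'.+1 then 2 * (12 * m).+1 * avoiding_bound K' + 2 else 0.

Lemma exists_avoiding_seq K (T : {set V}) : avoiding_bound K <= #|T| ->
  exists s, [/\ size s = K, uniq s, {subset s <= T} & avoiding s].
Proof.
elim: K T => [|K IH] T le_KT; first by exists [::]; split=> // x.
have T_gt0 : 0 < #|T| by apply: leq_trans le_KT; rewrite /= addn2.
have [c [U [cT sUT le_TU good_c]]] := exists_good_center T_gt0.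
have /IH[s [size_s uniq_s sU avs]] : avoiding_bound K <= #|U|.
  by have := leq_trans le_KT le_TU; rewrite /= leq_add2r leq_pmul2l.
have sT x : x \in s -> x \in T :\ c by move/sU/(subsetP sUT).
exists (c :: s); split=> /=; first by rewrite size_s.
- by rewrite uniq_s andbT; apply/negP => /sT; rewrite !inE eqxx.
- by move=> x /predU1P[->//|/sT]; rewrite inE => /andP[].
- by apply: avoiding_cons avs _ => y z /sU yU /sU zU; apply: good_c.
Qed.
End Avoiding.


Section Reach.
Variables (V : finType) (E : rel V).

Fixpoint reach k x y :=
  if k is k'.+1 then (x == y) || [exists z, E x z && reach k' z y] else x == y.

Lemma reach_edge k x z y : E x z -> reach k z y -> reach k.+1 x y.
Proof. by move=> xz zy; apply/orP; right; apply/existsP; exists z; rewrite xz. Qed.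

Lemma reach_mono k l x y : k <= l -> reach k x y -> reach l x y.
Proof.
elim: k l x => [|k IH] [|l] x //= kl; first by move->.
by case/orP=> [->//|/existsP[z /andP[xz zy]]]; apply: reach_edge xz (IH _ _ kl zy).
Qed.

Lemma reach_trans k l x y z : reach k x y -> reach l y z -> reach (k + l) x z.
Proof.
elim: k x => [|k IH] x; first by move=> /eqP->.
case/orP=> [/eqP-> yz|/existsP[w /andP[xw wy]] yz]; last exact: reach_edge xw (IH _ wy yz).
exact: reach_mono (leq_addl _ _) yz.
Qed.

Lemma dpath_le_reach k x y : dpath_le E k x y -> reach k x y.
Proof.
case=> p /and3P[xp /eqP<- size_p]; apply: reach_mono size_p _.
by elim: p x xp => [|z p IH] x /=; [rewrite eqxx | case/andP=> xz /IH; apply: reach_edge].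
Qed.

Fixpoint ball_bound c k := if k is k'.+1 then (c * ball_bound c k').+1 else 1.

Lemma card_reach_le c k x :
  max_outdeg_le E c -> #|[set y | reach k x y]| <= ball_bound c k.
Proof.
move=> outdeg; elim: k x => [|k IH] x /=.
  rewrite (_ : [set y | x == y] = [set x]) ?cards1 //.
  by apply/setP => y; rewrite !inE eq_sym.
have : [set y | (x == y) || [exists z, E x z && reach k z y]] \subset
    x |: \bigcup_(z in [set z | E x z]) [set y | reach k z y].
  apply/subsetP => y; rewrite !inE => /orP[/eqP->|/existsP[z /andP[xz zy]]].
    by rewrite eqxx.
  by apply/orP; right; apply/bigcupP; exists z; rewrite inE.
move/subset_leq_card/leq_trans; apply; rewrite cardsU1 -add1n leq_add ?leq_b1 //.
have := card_bigcup_le (mem [set z | E x z]) (fun z => [set y | reach k z y]).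
move/leq_trans; apply.
apply: (@leq_trans (\sum_(z in [set z | E x z]) ball_bound c k)); first exact: leq_sum.
by rewrite sum_nat_const leq_mul2r outdeg orbT.
Qed.
End Reach.


Section Distance.
Variables (V : finType) (E : rel V) (L : nat).

(* Capped at [L]: it is [L] when [y] is not reachable from [x] in fewer than [L] steps. *)
Definition dist x y := find (fun k => reach E k x y) (iota 0 L).

Lemma dist_leL x y : dist x y <= L.
Proof. by rewrite -[leqRHS](size_iota 0) find_size. Qed.

Lemma dist_leE k x y : k < L -> (dist x y <= k) = reach E k x y.
Proof.
move=> kL; apply/idP/idP => [le_dk | xy].
  have dL := leq_ltn_trans le_dk kL.
  have has_d : has (fun k => reach E k x y) (iota 0 L) by rewrite has_find size_iota.
  by apply: reach_mono le_dk _; have := nth_find 0 has_d; rewrite -/(dist x y) nth_iota.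
by rewrite leqNgt; apply/negP => /(before_find 0); rewrite nth_iota // xy.
Qed.

Lemma dist_eq0 x y : 0 < L -> (dist x y == 0) = (x == y).
Proof. by move=> L_gt0; rewrite -leqn0 dist_leE. Qed.

Lemma dist_edge x x' y : E x x' -> dist x y <= (dist x' y).+1.
Proof.
move=> xx'; case: (ltnP (dist x' y).+1 L) => [dL|]; last exact: leq_trans (dist_leL x y).
by rewrite dist_leE //; apply: reach_edge xx' _; rewrite -dist_leE // ltnW.
Qed.

(* Junk value [x] when no neighbour is closer to [y]. *)
Definition toward y x :=
  if [pick x' | E x x' && (dist x' y == (dist x y).-1)] is Some x' then x' else x.

Lemma toward_spec x y : 0 < dist x y < L ->
  E x (toward y x) /\ dist (toward y x) y = (dist x y).-1.
Proof.
case/andP=> d_gt0 dL; rewrite /toward; case: pickP => [x' /andP[xx' /eqP] //|none].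
have L_gt0 : 0 < L by apply: leq_ltn_trans dL.
have : reach E (dist x y) x y by rewrite -dist_leE.
case def_d : (dist x y) d_gt0 dL => [//|k] _ kL /orP[/eqP xy|/existsP[z /andP[xz zy]]].
  by move: (dist_eq0 y y L_gt0); rewrite -{1}xy def_d eqxx.
have le_zk : dist z y <= k by rewrite dist_leE // ltnW.
have := dist_edge y xz; have := none z; rewrite xz def_d /= => /negbT; lia.
Qed.

Lemma dist_iter_toward m x y : m <= dist x y < L ->
  dist (iter m (toward y) x) y = dist x y - m.
Proof.
case/andP=> + dL; elim: m => [|m IH] le_m; first by rewrite subn0.
have d_m := IH (ltnW le_m).
have d_pos : 0 < dist (iter m (toward y) x) y < L by rewrite d_m; lia.
by rewrite iterS; have [_ ->] := toward_spec d_pos; rewrite d_m; lia.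
Qed.

Lemma toward_iter_edge m x y : m < dist x y < L ->
  E (iter m (toward y) x) (iter m.+1 (toward y) x).
Proof.
move=> lt_m; rewrite iterS; apply: (toward_spec _).1.
by rewrite dist_iter_toward; lia.
Qed.

Lemma dist_iter_toward_le m x y u : m <= dist x y < L ->
  dist x u <= m + dist (iter m (toward y) x) u.
Proof.
case/andP=> + dL; elim: m => [|m IH] // le_m.
have := dist_edge u (@toward_iter_edge m x y _); have := IH (ltnW le_m); lia.
Qed.
End Distance.


Lemma dpath_le_sub (V : finType) (A A' : rel V) r x y :
  subrel A A' -> dpath_le A r x y -> dpath_le A' r x y.
Proof. by move=> AA' [p /and3P[Ap lp sp]]; exists p; rewrite (sub_path AA' Ap) lp sp. Qed.

Section CrownModel.
Variables (V : finType) (E : rel V) (r K : nat) (t : 'I_K -> V).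
Hypothesis terminals_far : forall i k, i != k -> ~~ reach E r (t i) (t k).

Let le_r_3r : r <= 3 * r := leq_pmull r (isT : 0 < 3).

Definition tdist i w := dist E (3 * r).+1 w (t i).
Definition tnext i := toward E (3 * r).+1 (t i).

Lemma tdist_leE k i w : k <= 3 * r -> (tdist i w <= k) = reach E k w (t i).
Proof. by move=> le_k; apply: dist_leE; rewrite ltnS. Qed.

Lemma tdist_eq0 i w : (tdist i w == 0) = (w == t i).
Proof. exact: dist_eq0. Qed.

Lemma tdist_edge i x y : E x y -> tdist i x <= (tdist i y).+1.
Proof. exact: dist_edge. Qed.

Lemma tnext_spec i x : 0 < tdist i x <= 3 * r ->
  E x (tnext i x) /\ tdist i (tnext i x) = (tdist i x).-1.
Proof. by move=> d_x; apply: toward_spec; rewrite ltnS. Qed.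

Lemma tdist_iter m i x : m <= tdist i x <= 3 * r ->
  tdist i (iter m (tnext i) x) = tdist i x - m.
Proof. by move=> d_x; apply: dist_iter_toward; rewrite ltnS. Qed.

Lemma tdist_iter_le m i j x : m <= tdist i x <= 3 * r ->
  tdist j x <= m + tdist j (iter m (tnext i) x).
Proof. by move=> d_x; apply: dist_iter_toward_le; rewrite ltnS. Qed.

(* The margin [r] keeps the source of a pair of terminals out of their cells. *)
Definition cell i :=
  [set w | (tdist i w <= r) && [forall k, (k != i) ==> (tdist i w + r < tdist k w)]].

Lemma cellP i w : reflect (tdist i w <= r /\ forall k, k != i -> tdist i w + r < tdist k w)
  (w \in cell i).
Proof.
rewrite inE; apply: (iffP andP) => -[le_r far]; split=> //.
  by move=> k ki; apply: (implyP (forallP far k)).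
by apply/forallP => k; apply/implyP; apply: far.
Qed.

Lemma terminal_in_cell i : t i \in cell i.
Proof.
have d_t : tdist i (t i) = 0 by apply/eqP; rewrite tdist_eq0.
apply/cellP; rewrite d_t; split=> // k ki; rewrite add0n ltnNge tdist_leE //.
by apply: terminals_far; rewrite eq_sym.
Qed.

Lemma cell_disjoint i k : i != k -> [disjoint cell i & cell k].
Proof.
move=> ik; rewrite disjoint_subset; apply/subsetP => w /cellP[_ far_i].
rewrite inE; apply/cellP => -[_ far_k].
by have := far_k i ik; have := far_i k; rewrite eq_sym ik => /(_ isT); lia.
Qed.

Lemma cell_next i w : w \in cell i -> 0 < tdist i w ->
  [/\ E w (tnext i w), tnext i w \in cell i & tdist i (tnext i w) = (tdist i w).-1].
Proof.
move=> /cellP[le_r far] d_pos.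
have d_w : 0 < tdist i w <= 3 * r by rewrite d_pos (leq_trans le_r le_r_3r).
have [w_next d_next] := tnext_spec d_w.
split=> //; apply/cellP; rewrite d_next; split=> [|k ki]; first lia.
by have := far k ki; have := tdist_edge k w_next; lia.
Qed.

Definition follow i (Z : {set V}) x y :=
  [&& x \in Z, y \in Z, 0 < tdist i x <= r & y == tnext i x].

Lemma follow_arc i Z x y : follow i Z x y -> [/\ E x y, x \in Z & y \in Z].
Proof.
case/and4P=> xZ yZ /andP[d_pos le_r] /eqP y_next; split=> //; rewrite y_next.
have d_x : 0 < tdist i x <= 3 * r by rewrite d_pos (leq_trans le_r le_r_3r).
exact: (tnext_spec d_x).1.
Qed.

Lemma follow_path i (Z : {set V}) w n : n <= tdist i w <= r ->
  (forall j, j <= n -> iter j (tnext i) w \in Z) ->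
  dpath_le (follow i Z) r w (iter n (tnext i) w).
Proof.
case/andP=> le_n le_r inZ; exists (traject (tnext i) (tnext i w) n).
rewrite last_traject size_traject eqxx (leq_trans le_n le_r) !andbT.
elim: n le_n inZ => [|n IH] lt_n inZ //.
have path_n := IH (ltnW lt_n) (fun j le_j => inZ j (leq_trans le_j (leqnSn n))).
have le_3r := leq_trans le_r le_r_3r.
rewrite trajectSr rcons_path last_traject path_n /= /follow -iterSr !inZ ?leqnSn //.
by rewrite iterS eqxx tdist_iter ?(ltnW lt_n) ?le_3r //= andbT; lia.
Qed.

Lemma cell_walk i w : w \in cell i -> dpath_le (follow i (cell i)) r w (t i).
Proof.
move=> w_cell; have /cellP[le_r _] := w_cell.
have le_3r := leq_trans le_r le_r_3r.
have iter_cell j : j <= tdist i w -> iter j (tnext i) w \in cell i.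
  elim: j => [|j IH] lt_j //.
  have d_pos : 0 < tdist i (iter j (tnext i) w).
    by rewrite tdist_iter ?(ltnW lt_j) ?le_3r // subn_gt0.
  by case: (cell_next (IH (ltnW lt_j)) d_pos).
have -> : t i = iter (tdist i w) (tnext i) w.
  by apply/esym/eqP; rewrite -tdist_eq0 tdist_iter ?leqnn ?le_3r // subnn.
by apply: follow_path; rewrite ?leqnn.
Qed.

Definition pair_source a b s := [/\ a != b, reach E r s (t a), reach E r s (t b)
  & forall k, k != a -> k != b -> ~~ reach E (3 * r) s (t k)].

Lemma pair_source_sym a b s : pair_source a b s -> pair_source b a s.
Proof. by case=> ab sa sb far; split=> // [|k kb ka]; rewrite 1?eq_sym ?far. Qed.

Definition near_pair a b x :=
  [/\ tdist a x <= 2 * r, tdist b x <= 2 * r & forall k, k != a -> k != b -> 2 * r < tdist k x].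

Definition entry a s := find (mem (cell a)) (traject (tnext a) s (tdist a s).+1).
Definition segment a s := [set x in traject (tnext a) s (entry a s)].
Definition exit a s := (iter (entry a s).-1 (tnext a) s, iter (entry a s) (tnext a) s).

Lemma segmentP a s x : reflect (exists2 m, m < entry a s & x = iter m (tnext a) s)
  (x \in segment a s).
Proof. by rewrite inE; apply: trajectP. Qed.

Section Segment.
Variables (a b : 'I_K) (s : V).
Hypothesis source_ab : pair_source a b s.

Lemma source_tdist :
  [/\ tdist a s <= r, tdist b s <= r & forall k, k != a -> k != b -> 3 * r < tdist k s].
Proof.
case: source_ab => _ sa sb far; rewrite !tdist_leE //; split=> // k ka kb.
by rewrite ltnNge tdist_leE ?far.
Qed.

Lemma entry_spec : [/\ 0 < entry a s, entry a s <= tdist a s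
  & iter (entry a s) (tnext a) s \in cell a].
Proof.
have [le_a le_b _] := source_tdist.
have d_iter : iter (tdist a s) (tnext a) s = t a.
  by apply/eqP; rewrite -tdist_eq0 tdist_iter ?leqnn ?(leq_trans le_a le_r_3r) // subnn.
have le_entry : entry a s <= tdist a s.
  rewrite leqNgt; apply/negP => /(before_find s).
  by rewrite nth_traject // d_iter /= terminal_in_cell.
have in_cell : iter (entry a s) (tnext a) s \in cell a.
  have has_cell : has (mem (cell a)) (traject (tnext a) s (tdist a s).+1).
    by rewrite has_find size_traject ltnS.
  by have := nth_find s has_cell; rewrite nth_traject ?ltnS.
split=> //; rewrite lt0n; apply: contraTneq in_cell => -> /=; apply/cellP => -[_ /(_ b)].
by case: source_ab => ab _ _ _; rewrite eq_sym ab => /(_ isT); lia.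
Qed.

Lemma before_entry m : m < entry a s -> iter m (tnext a) s \notin cell a.
Proof.
have [_ le_entry _] := entry_spec => lt_m.
have lt_md : m < (tdist a s).+1 by rewrite ltnS (leq_trans (ltnW lt_m)).
by have := before_find s lt_m; rewrite nth_traject // => /negbT.
Qed.

Lemma source_in_segment : s \in segment a s.
Proof. by have [entry_gt0 _ _] := entry_spec; apply/segmentP; exists 0. Qed.

Lemma segment_near x : x \in segment a s -> near_pair a b x /\ forall l, x \notin cell l.
Proof.
case/segmentP => m lt_m ->{x}; have x_out := before_entry lt_m.
have [le_a le_b far] := source_tdist; have [_ le_entry _] := entry_spec.
have d_m : m <= tdist a s <= 3 * r by apply/andP; split; lia.
have far2 k : k != a -> k != b -> 2 * r < tdist k (iter m (tnext a) s).
  by move=> ka kb; have := far k ka kb; have := tdist_iter_le k d_m; lia.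
have d_a := tdist_iter d_m; set x := iter m (tnext a) s in x_out d_a far2 *.
split; last first.
  move=> l; case: (eqVneq l a) => [->//|la]; apply/negP => /cellP[_ /(_ a)].
  by rewrite eq_sym la d_a => /(_ isT); lia.
split=> //; first lia.
move: x_out; rewrite inE d_a (_ : tdist a s - m <= r) /=; last lia.
case/forallPn => k; rewrite negb_imply -leqNgt => /andP[ka le_k].
by case: (eqVneq k b) => [<-|kb]; [lia | have := far2 k ka kb; lia].
Qed.

Lemma segment_walk x : x \in segment a s -> dpath_le (follow a (segment a s)) r s x.
Proof.
have [le_a _ _] := source_tdist; have [_ le_entry _] := entry_spec.
case/segmentP => m lt_m ->; apply: follow_path => [|j le_j]; first by apply/andP; split; lia.
by apply/segmentP; exists j; first exact: leq_ltn_trans le_j lt_m.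
Qed.

Lemma exit_arc :
  [/\ E (exit a s).1 (exit a s).2, (exit a s).1 \in segment a s & (exit a s).2 \in cell a].
Proof.
have [le_a _ _] := source_tdist; have [entry_gt0 le_entry in_cell] := entry_spec.
have d_m : (entry a s).-1 <= tdist a s <= 3 * r by apply/andP; split; lia.
split=> //=; last by apply/segmentP; exists (entry a s).-1; rewrite ?prednK.
rewrite -{2}(prednK entry_gt0) iterS; apply: (tnext_spec _).1.
by rewrite tdist_iter //; lia.
Qed.
End Segment.

Lemma near_pair_sym a b x : near_pair a b x -> near_pair b a x.
Proof. by case=> xa xb far; split=> // k kb ka; apply: far. Qed.

Variable src : 'I_K -> 'I_K -> V.
Hypothesis src_pair_source : forall i j : 'I_K, i < j -> pair_source i j (src i j).

Local Notation pairs := {p : 'I_K * 'I_K | p.1 < p.2}.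
Definition pa (p : pairs) := (val p).1.
Definition pb (p : pairs) := (val p).2.
Definition psrc (p : pairs) := src (pa p) (pb p).

Lemma psrc_source p : pair_source (pa p) (pb p) (psrc p).
Proof. exact: src_pair_source (valP p). Qed.

Lemma near_pair_inj (p q : pairs) x :
  near_pair (pa p) (pb p) x -> near_pair (pa q) (pb q) x -> p = q.
Proof.
case=> _ _ far_p [qa_x qb_x _].
have in_p k : tdist k x <= 2 * r -> (k == pa p) || (k == pb p).
  by move=> le_k; apply/negPn/negP; rewrite negb_or => /andP[ka kb]; have := far_p k ka kb; lia.
apply: val_inj; have := valP q; have := valP p; have := in_p _ qa_x; have := in_p _ qb_x.
rewrite /pa /pb; case: (val p) (val q) => [a b] [a' b'] /=.
case/orP=> /eqP-> /orP[]/eqP->; rewrite ?ltnn ?andbF //.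
by move=> ab /(ltn_trans ab); rewrite ltnn.
Qed.

Definition branch (v : crownV K) : {set V} :=
  match v with
  | inl i => cell i
  | inr p => segment (pa p) (psrc p) :|: segment (pb p) (psrc p)
  end.

Definition inner (v : crownV K) : rel V :=
  match v with
  | inl i => follow i (cell i)
  | inr p => fun x y => follow (pa p) (segment (pa p) (psrc p)) x y
                     || follow (pb p) (segment (pb p) (psrc p)) x y
  end.

(* Crown arcs only leave pair vertices; the other values are never used. *)
Definition arc_image (u w : crownV K) : V * V :=
  match u with
  | inl i => (t i, t i)
  | inr p => if w == inl (pa p) then exit (pa p) (psrc p) else exit (pb p) (psrc p)
  end.

Lemma branch_pair p x : x \in branch (inr p) ->
  near_pair (pa p) (pb p) x /\ forall l, x \notin cell l.
Proof.
case/setUP => x_seg; first by have := segment_near (psrc_source p) x_seg.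
have [near_x out_x] := segment_near (pair_source_sym (psrc_source p)) x_seg.
by split; first exact: near_pair_sym.
Qed.

Lemma inner_arc v x y : inner v x y -> [/\ E x y, x \in branch v & y \in branch v].
Proof.
case: v => [i|p] /=; first exact: follow_arc.
by case/orP => /follow_arc[xy x_in y_in]; split; rewrite // inE ?x_in ?y_in ?orbT.
Qed.

Lemma branch_disjoint u w : u != w -> [disjoint branch u & branch w].
Proof.
move=> uw; rewrite disjoint_subset; apply/subsetP => x x_u; rewrite inE; apply/negP => x_w.
case: u w uw x_u x_w => [i|p] [k|q] uw x_u x_w.
- by have := cell_disjoint uw; rewrite disjoint_subset => /subsetP/(_ x x_u); rewrite inE x_w.
- by have [_ /(_ i)] := branch_pair x_w; rewrite x_u.
- by have [_ /(_ k)] := branch_pair x_u; rewrite x_w.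
- have [near_p _] := branch_pair x_u; have [near_q _] := branch_pair x_w.
  by move: uw; rewrite (near_pair_inj near_p near_q) eqxx.
Qed.

Lemma arc_image_arc u w : crownE u w ->
  [/\ E (arc_image u w).1 (arc_image u w).2,
      (arc_image u w).1 \in branch u & (arc_image u w).2 \in branch w].
Proof.
case: u w => [i|p] [k|q] //= /orP[]/eqP->.
  by have [xy x_in y_in] := exit_arc (psrc_source p); rewrite eqxx; split; rewrite // inE x_in.
have [xy x_in y_in] := exit_arc (pair_source_sym (psrc_source p)).
have ab : pb p != pa p by case: (psrc_source p) => ab _ _ _; rewrite eq_sym.
rewrite (inj_eq (@inl_inj _ _)) ifN //.
by split; rewrite // inE x_in orbT.
Qed.

Lemma crown_depth_minor : depth_minor r (@crownE K) E.
Proof.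
exists branch, inner, arc_image.
split; first exact: inner_arc.
split; first exact: branch_disjoint.
split; first exact: arc_image_arc.
case=> [k|p].
- split; first by move=> x y _ /imsetP[w]; rewrite inE; case: w.
  split; exists (t k); rewrite ?terminal_in_cell //.
    by move=> y /imsetP[w]; rewrite inE; case: w.
  move=> x /imsetP[u]; rewrite inE => /arc_image_arc[_ _ x_k] ->.
  exact: cell_walk.
- have s_in : psrc p \in branch (inr p).
    by rewrite inE (source_in_segment (psrc_source p)).
  split; first by move=> x y /imsetP[u]; rewrite inE; case: u.
  split; exists (psrc p) => //; last by move=> x /imsetP[u]; rewrite inE; case: u.
  move=> y /imsetP[w]; rewrite inE => /arc_image_arc[_ y_p _] ->.
  case/setUP: y_p => y_seg.
    by apply: dpath_le_sub (segment_walk (psrc_source p) y_seg) => x z /= ->.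
  apply: dpath_le_sub (segment_walk (pair_source_sym (psrc_source p)) y_seg).
  by move=> x z /= ->; rewrite orbT.
Qed.
End CrownModel.


Lemma crown_minor_of_avoiding (V : finType) (E : rel V) (r K : nat)
    (src : V -> V -> V) (w : V) (ts : seq V) :
  size ts = K -> uniq (w :: ts) ->
  {in w :: ts &, forall a b, reach E r (src a b) a && reach E r (src a b) b} ->
  avoiding (fun a b => [set x | reach E (3 * r) (src a b) x]) (w :: ts) ->
  depth_minor r (@crownE K) E.
Proof.
move=> size_ts /andP[w_ts uniq_ts] src_reach avoid.
pose t (i : 'I_K) := nth w ts i.
have t_in i : t i \in w :: ts by rewrite inE mem_nth ?orbT ?size_ts.
have t_eq i k : (t i == t k) = (i == k) by rewrite nth_uniq ?size_ts.
have t_w i : t i != w by apply: contraNneq w_ts => <-; rewrite mem_nth ?size_ts.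
have w_in : w \in w :: ts by rewrite inE eqxx.
apply: (@crown_depth_minor _ _ _ _ t _ (fun i j => src (t i) (t j))).
  move=> i k ik; apply/negP => tik.
  have /andP[src_i _] := src_reach _ _ (t_in i) w_in.
  have := avoid _ _ _ (t_in i) w_in (t_in k); rewrite t_w t_eq eq_sym ik t_w inE.
  by move/(_ isT isT isT)/negP; apply; apply: reach_mono (reach_trans src_i tik); lia.
move=> i j ij; have ij' : i != j by rewrite neq_ltn ij.
have /andP[src_i src_j] := src_reach _ _ (t_in i) (t_in j).
split=> // k ki kj; have := avoid _ _ _ (t_in i) (t_in j) (t_in k).
by rewrite !t_eq ij' ki kj inE => /(_ isT isT isT).
Qed.

Theorem mainTheorem16 :
  forall r c K : nat, exists N : nat,
    forall (V : finType) (E : rel V), max_outdeg_le E c ->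
    forall S T : {set V}, N <= #|T| ->
    (forall t t', t \in T -> t' \in T ->
       exists2 s, s \in S & dpath_le E r s t /\ dpath_le E r s t') ->
    depth_minor r (@crownE K) E.
Proof.
move=> r c K; exists (avoiding_bound (ball_bound c (3 * r)) K.+1).
move=> V E outdeg S T le_NT common_source.
pose src a b := odflt a [pick s | reach E r s a && reach E r s b].
have src_reach : {in T &, forall a b, reach E r (src a b) a && reach E r (src a b) b}.
  move=> a b aT bT; rewrite /src; case: pickP => [s //|none].
  have [s _ [/dpath_le_reach sa /dpath_le_reach sb]] := common_source a b aT bT.
  by have := none s; rewrite sa sb.
have card_ball a b : #|[set x | reach E (3 * r) (src a b) x]| <= ball_bound c (3 * r).
  exact: card_reach_le.
have [[|w ts] [//= [size_ts] uniq_ts sub_T avoid]] := exists_avoiding_seq card_ball le_NT.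
apply: crown_minor_of_avoiding size_ts uniq_ts _ avoid.
by move=> a b /sub_T aT /sub_T bT; apply: src_reach.
Qed.
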